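(* If $R$ is a von Neumann regular, locally finite dimensional $K$-algebra, then $R$ is locally unit-regular.
   Context: $K$ is a field; algebras are associative, not necessarily unital. A ring $R$ is regular if for each $x\in R$ there is $y$ with $xyx=x$. A $K$-algebra is locally finite dimensional if every finite subset is contained in a finite dimensional subalgebra. A unital ring $S$ is unit-regular if for each $x\in S$ there is a unit $u$ of $S$ with $xux = x$. A $K$-algebra $R$ is locally unit-regular if every finite subset of $R$ is contained in a $K$-subalgebra of $R$ that has its own identity element and is unit-regular. *)

(* A (possibly non-unital) associative K-algebra R is modelled as
   a K-module V : lmodType K together with a bilinear associative multiplication. *)
From mathcomp Require Import all_boot all_algebra.
Set Implicit Arguments. Unset Strict Implicit. Unset Printing Implicit Defensive.
Import GRing.Theory.
Local Open Scope ring_scope.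

Section Defs.
Variables (K : fieldType) (V : lmodType K) (mul : V -> V -> V).

Definition assoc_algebra_mul : Prop :=
  (forall x y z, mul x (mul y z) = mul (mul x y) z) /\
  (forall (a : K) x y z, mul (a *: x + y) z = a *: mul x z + mul y z) /\
  (forall (a : K) x y z, mul z (a *: x + y) = a *: mul z x + mul z y).

Definition vN_regular : Prop := forall x, exists y, mul (mul x y) x = x.

Definition is_subalgebra (S : V -> Prop) : Prop :=
  S 0 /\ (forall x y, S x -> S y -> S (x + y)) /\
  (forall (a : K) x, S x -> S (a *: x)) /\
  (forall x y, S x -> S y -> S (mul x y)).

Definition finite_dim (S : V -> Prop) : Prop :=
  exists s : seq V, (forall i : 'I_(size s), S s`_i) /\
    forall x, S x -> exists c : 'I_(size s) -> K, x = \sum_(i < size s) c i *: s`_i.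

Definition locally_finite_dim : Prop :=
  forall F : seq V, exists S : V -> Prop,
    is_subalgebra S /\ finite_dim S /\ (forall x, x \in F -> S x).

Definition unital_unit_regular (S : V -> Prop) : Prop :=
  exists e, S e /\ (forall x, S x -> mul e x = x /\ mul x e = x) /\
    forall x, S x -> exists u v, S u /\ S v /\ mul u v = e /\ mul v u = e /\
                              mul (mul x u) x = x.

Definition locally_unit_regular : Prop :=
  forall F : seq V, exists S : V -> Prop,
    is_subalgebra S /\ (forall x, x \in F -> S x) /\ unital_unit_regular S.

End Defs.

(* Regularity lets one absorb elements one at a time into an idempotent, so every
   finite set lies in a corner eRe, a unital subalgebra. Fix x in eRe. Finite
   dimensionality of a subalgebra containing e and x gives a Fitting-type index
   n with x^n in R x^(n+1). Descending from n with the help of inner inverses of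
   the powers of x, one finds d mapping eR inter r.ann(x) injectively into eR
   modulo xR. For an inner inverse y of x, the element a := x + (e - xy) d (e - yx)
   of eRe is then injective on eR and satisfies a (yx) = x. Finite dimensionality
   once more shows that a is a unit of eRe, and x a^-1 x = a (yx) a^-1 a (yx) = x. *)

From HB Require Import structures.
From mathcomp Require Import all_boot all_algebra sesquilinear.
Set Implicit Arguments. Unset Strict Implicit. Unset Printing Implicit Defensive.
Import GRing.Theory.
Local Open Scope ring_scope.

Section LinearIterates.
Variables (K : fieldType) (V : lmodType K).

Lemma span_dependent (s : seq V) (v : 'I_(size s).+1 -> V) :
  (forall i, exists c : 'I_(size s) -> K, v i = \sum_(j < size s) c j *: s`_j) ->
  exists2 r : 'I_(size s).+1 -> K, (exists i, r i != 0) & \sum_i r i *: v i = 0.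
Proof.
move=> v_span.
have /fin_all_exists[C vC] i : exists c : 'rV[K]_(size s), v i = \sum_j c 0 j *: s`_j.
  by have [c ->] := v_span i; exists (\row_j c j); apply: eq_bigr => j _; rewrite mxE.
pose A := \matrix_(i, j) C i 0 j.
have /rowV0Pn[r /sub_kermxP rA r_neq0] : kermx A != 0.
  by rewrite -mxrank_eq0 mxrank_ker subn_eq0 -ltnNge ltnS rank_leq_col.
exists (r 0).
  apply/existsP; apply: contraNT r_neq0 => /existsPn r0.
  by apply/eqP/rowP => i; rewrite !mxE; apply/eqP/negPn/r0.
under eq_bigr do rewrite vC scaler_sumr.
rewrite exchange_big big1 // => j _; under eq_bigr do rewrite scalerA; rewrite -scaler_suml.
have := congr1 (fun M : 'rV_(size s) => M 0 j) rA; rewrite !mxE.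
by under eq_bigr do rewrite mxE; move=> ->; rewrite scale0r.
Qed.

Variable f : {linear V -> V}.

Lemma iter_linearB m u v : iter m f (u - v) = iter m f u - iter m f v.
Proof. by elim: m => //= m ->; rewrite linearB. Qed.

Lemma iter_image_of_relation n t (r : nat -> K) :
  (exists2 i, (i < n)%N & r i != 0) -> \sum_(i < n) r i *: iter i f t = 0 ->
  exists m k (c : nat -> K), iter m f t = iter m.+1 f (\sum_(i < k) c i *: iter i f t).
Proof.
elim: n t r => [|n IHn] t r [i lt_in ri_neq0]; first by [].
rewrite big_ord_recl /=.
have [r0|r0_neq0] := eqVneq (r 0%N) 0.
  rewrite r0 scale0r add0r => rel.
  have ri_neq0' : exists2 i, (i < n)%N & r i.+1 != 0.
    by case: i lt_in ri_neq0 => [|i]; [rewrite r0 eqxx | exists i].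
  have rel' : \sum_(i < n) r i.+1 *: iter i f (f t) = 0.
    by rewrite -{}[RHS]rel; apply: eq_bigr => j _; rewrite -iterSr.
  have [m [k [c iter_c]]] := IHn (f t) _ ri_neq0' rel'.
  exists m.+1, k, c; rewrite [LHS]iterSr iter_c -iterS [RHS]iterSr linear_sum.
  by congr (iter _ _ _); apply: eq_bigr => j _; rewrite linearZ -iterSr iterS.
move=> rel; exists 0%N, n, (fun i => - (r 0%N)^-1 * r i.+1).
have {}rel : r 0%N *: t = - \sum_(i < n) r (bump 0 i) *: f (iter (0 + i) f t).
  by apply/eqP; rewrite -addr_eq0; apply/eqP.
rewrite /= linear_sum (eq_bigr (fun i : 'I_n => - (r 0%N)^-1 *: (r i.+1 *: f (iter i f t)))).
  by rewrite -scaler_sumr scaleNr -scalerN -rel scalerA mulVf // scale1r.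
by move=> j _; rewrite linearZ scalerA.
Qed.

Lemma iter_image_of_span (s : seq V) t :
  (forall i, exists c : 'I_(size s) -> K, iter i f t = \sum_(j < size s) c j *: s`_j) ->
  exists m w, iter m f t = iter m.+1 f w.
Proof.
move=> iter_span.
have [r [i ri_neq0] rel] := span_dependent (fun i : 'I_(size s).+1 => iter_span i).
have [||m [k [c iter_c]]] := @iter_image_of_relation (size s).+1 t (fun n => r (inord n)).
- by exists i; rewrite ?inord_val.
- by rewrite -{}[RHS]rel; apply: eq_bigr => j _; rewrite inord_val.
by exists m, (\sum_(i < k) c i *: iter i f t).
Qed.

End LinearIterates.

Section LocalLeftUnit.
Variables (K : fieldType) (V : lmodType K) (mul : {bilinear V -> V -> V}).
Hypotheses (mulA : associative mul) (mul_regular : vN_regular mul).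

Lemma local_left_unit (F : seq V) :
  exists e, mul e e = e /\ forall x, x \in F -> mul e x = x.
Proof.
elim: F => [|a F [e [e_idem eF]]].
  by exists 0; split => [|x //]; rewrite linear0l.
have [b aba] := mul_regular a.
set f := mul a b.
have [c' cc'c] := mul_regular (f - mul e f).
set c := f - mul e f in cc'c *.
have ec : mul e c = 0 by rewrite linearBr (mulA e e) e_idem subrr.
set g := mul c c'.
have eg : mul e g = 0 by rewrite /g mulA ec linear0l.
have gg : mul g g = g by rewrite {2}/g mulA cc'c.
pose h := g - mul g e.
have eh : mul e h = 0 by rewrite linearBr eg mulA eg linear0l subrr.
have he : mul h e = 0 by rewrite linearBl /= -mulA e_idem subrr.
have hh : mul h h = h.
  by rewrite {1}/h linearBl /= -mulA eh linear0r subr0 /h linearBr gg mulA gg.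
have hc : mul h c = c by rewrite linearBl /= cc'c -mulA ec linear0r subr0.
clearbody h.
exists (e + h); split.
  by rewrite linearDl /= !linearDr e_idem eh he hh addr0 add0r.
have e'e : mul (e + h) e = e by rewrite linearDl /= e_idem he addr0.
have e'f : mul (e + h) f = f.
  have -> : f = mul e f + c by rewrite /c addrC subrK.
  by rewrite linearDr mulA e'e linearDl /= ec hc add0r.
move=> x; rewrite in_cons => /orP [/eqP ->|Fx].
  by rewrite -{1}aba mulA e'f.
by rewrite -(eF x Fx) mulA e'e.
Qed.

End LocalLeftUnit.

Section LocallyFiniteRegular.
Variables (K : fieldType) (V : lmodType K) (mul : {bilinear V -> V -> V}).
Hypotheses (mulA : associative mul) (mul_regular : vN_regular mul).
Hypothesis mul_lfd : locally_finite_dim mul.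

Let op_bilinear : bilinear_for *:%R *:%R (applyr mul).
Proof. by split=> z a x y /=; [exact: linearPr | exact: linearPl]. Qed.
HB.instance Definition _ := bilinear_isBilinear.Build K V V V *:%R *:%R (applyr mul) op_bilinear.

Lemma local_right_unit (F : seq V) :
  exists e, mul e e = e /\ forall x, x \in F -> mul x e = x.
Proof.
have op_assoc : associative (applyr mul) by move=> x y z /=; rewrite mulA.
have op_regular : vN_regular (applyr mul).
  by move=> x; have [y xyx] := mul_regular x; exists y; rewrite /= mulA.
exact: (local_left_unit op_assoc op_regular F).
Qed.

Lemma local_unit (F : seq V) :
  exists e, mul e e = e /\ forall x, x \in F -> mul e x = x /\ mul x e = x.
Proof.
have [g [g_idem Fg]] := local_right_unit F.
have [f [f_idem fF]] := local_left_unit mulA mul_regular (g :: F).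
have fg : mul f g = g by apply: fF; rewrite mem_head.
exists (f + g - mul g f).
have e'f : mul (f + g - mul g f) f = f.
  by rewrite linearBl linearDl /= f_idem -mulA f_idem addrK.
have e'g : mul (f + g - mul g f) g = g.
  by rewrite linearBl linearDl /= fg g_idem -mulA fg g_idem addrK.
split; first by rewrite linearBr linearDr e'f e'g mulA e'g.
move=> x Fx; have xg := Fg x Fx.
have fx : mul f x = x by apply: fF; rewrite in_cons Fx orbT.
split; first by rewrite linearBl linearDl /= fx -mulA fx addrK.
by rewrite linearBr linearDr xg mulA xg addrC addKr.
Qed.

Lemma lfd_iter_image (f : {linear V -> V}) z t :
  (forall S, is_subalgebra mul S -> S z -> forall w, S w -> S (f w)) ->
  exists m w, iter m f t = iter m.+1 f w.
Proof.
move=> f_stable.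
have [S [S_sub [[s [_ S_span]] zt_S]]] := mul_lfd [:: z; t].
have Sz : S z by apply: zt_S; rewrite mem_head.
have S_iter i : S (iter i f t).
  elim: i => [|i IHi]; first by apply: zt_S; rewrite !inE eqxx orbT.
  exact: f_stable S_sub Sz _ IHi.
by apply: (iter_image_of_span (s := s)) => i; apply: S_span.
Qed.

Definition corner e v := mul e v = v /\ mul v e = v.

Definition right_multiple u v := exists s, v = mul u s.

Section Corner.
Variable e : V.
Hypothesis e_idem : mul e e = e.

Lemma corner_subalgebra : is_subalgebra mul (corner e).
Proof.
split; first by split; rewrite ?linear0l ?linear0r.
split; first by move=> x y [ex xe] [ey ye]; split; rewrite ?linearDr ?linearDl /= ?ex ?xe ?ey ?ye.
split; first by move=> a x [ex xe]; split; rewrite ?linearZ ?linearZl_LR /= ?ex ?xe.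
by move=> x y [ex xe] [ey ye]; split; rewrite ?mulA ?ex // -mulA ye.
Qed.

Lemma corner_regular x : corner e x -> exists2 y, corner e y & mul (mul x y) x = x.
Proof.
move=> [ex xe]; have [y xyx] := mul_regular x.
exists (mul (mul e y) e); first by split; [rewrite !mulA e_idem | rewrite -mulA e_idem].
by rewrite !mulA xe -(mulA _ e x) ex.
Qed.

Lemma corner_unit_of_injective a : corner e a ->
    (forall w, mul e w = w -> mul a w = 0 -> w = 0) ->
  exists b, corner e b /\ mul a b = e /\ mul b a = e.
Proof.
move=> [ea ae] a_inj.
have iter_inj m w : mul e w = w -> iter m (mul a) w = 0 -> w = 0.
  elim: m w => [//|m IHm] w ew; rewrite iterSr => /IHm aw.
  by apply: a_inj => //; apply: aw; rewrite mulA ea.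
have [m [w am]] : exists m w, iter m (mul a) e = iter m.+1 (mul a) w.
  by apply: (lfd_iter_image (z := a)) => S [_ [_ [_ S_mul]]] Sa w; apply: S_mul.
have aw : mul a w = e.
  apply/eqP; rewrite eq_sym -subr_eq0; apply/eqP; apply: (iter_inj m).
    by rewrite linearBr e_idem mulA ea.
  by rewrite iter_linearB am iterSr subrr.
pose b := mul (mul e w) e.
have ab : mul a b = e by rewrite /b mulA mulA ae aw e_idem.
have b_corner : corner e b by split; [rewrite /b !mulA e_idem | rewrite /b -mulA e_idem].
exists b; split=> //; split=> //.
apply/eqP; rewrite -subr_eq0; apply/eqP; apply: a_inj.
  by rewrite linearBr e_idem mulA b_corner.1.
by rewrite linearBr mulA ab ea ae subrr.
Qed.

Section Element.
Variable x : V.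
Hypotheses (ex : mul e x = x) (xe : mul x e = x).

Definition cpow n := iter n (mul x) e.
Arguments cpow : simpl never.

Lemma cpowS n : cpow n.+1 = mul x (cpow n).
Proof. by []. Qed.

Lemma cpowSr n : cpow n.+1 = mul (cpow n) x.
Proof.
elim: n => [|n IHn]; first by rewrite /cpow /= xe ex.
by rewrite cpowS IHn mulA -cpowS -IHn.
Qed.

Lemma e_cpow n : mul e (cpow n) = cpow n.
Proof. by case: n => [|n]; [exact: e_idem | rewrite cpowS mulA ex]. Qed.

Lemma cpow1 : cpow 1 = x.
Proof. by rewrite cpowS xe. Qed.

Lemma iter_mulr_cpow k t : iter k.+1 (applyr mul x) t = mul t (cpow k.+1).
Proof.
elim: k => [|k IHk]; first by rewrite cpow1.
by rewrite iterS IHk /= -mulA -cpowSr.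
Qed.

Lemma strongly_pi_regular : exists n w, cpow n = mul w (cpow n.+1).
Proof.
have [m [w mw]] : exists m w, iter m (applyr mul x) e = iter m.+1 (applyr mul x) w.
  by apply: (lfd_iter_image (z := x)) => S [_ [_ [_ S_mul]]] Sx w Sw; apply: S_mul.
exists m, w; rewrite -iter_mulr_cpow -mw.
by case: m {mw} => [|m]; rewrite // iter_mulr_cpow e_cpow.
Qed.

Definition kernel_lift j d := forall v, mul x v = 0 -> right_multiple (cpow j) v ->
  right_multiple (cpow j) (mul d v) /\ (right_multiple (cpow j.+1) (mul d v) -> v = 0).

Lemma kernel_lift_base n w : cpow n = mul w (cpow n.+1) -> kernel_lift n 0.
Proof.
move=> nw v xv [s vs].
have -> : v = 0 by rewrite vs nw -mulA cpowS -mulA -vs xv linear0r.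
by split=> //; exists 0; rewrite linear0l linear0r.
Qed.

Lemma kernel_projection j : exists h,
  (forall v, mul x (mul h v) = 0 /\ right_multiple (cpow j) (mul h v)) /\
  (forall w, mul x w = 0 -> right_multiple (cpow j) w -> mul h w = w).
Proof.
(* x kills u, and uR contains every w in x^j R with xw = 0; an idempotent
   generator of uR is the projection. *)
have [y yreg] := mul_regular (cpow j.+1).
pose u := cpow j - mul (mul (cpow j) y) (cpow j.+1).
have uE w : mul u w = mul (cpow j) (w - mul y (mul (cpow j.+1) w)).
  by rewrite linearBl linearBr /= !mulA.
have xu : mul x u = 0 by rewrite linearBr (mulA x) (mulA x) -cpowS yreg subrr.
have [u' uu'u] := mul_regular u.
exists (mul u u'); split=> [v|w xw [s ws]].
  split; first by rewrite !mulA xu !linear0l.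
  by exists (mul u' v - mul y (mul (cpow j.+1) (mul u' v))); rewrite -mulA uE.
have us : mul u s = w by rewrite uE cpowS -mulA -ws xw linear0r subr0 ws.
by rewrite -us mulA uu'u.
Qed.

Lemma kernel_lift_step j d1 : kernel_lift j.+1 d1 -> exists d, kernel_lift j d.
Proof.
move=> lift1.
have [h [h_range h_id]] := kernel_projection j.+1.
have [y yreg] := mul_regular (cpow j.+1).
(* On the image of h, d acts through d1 (pulled back from x^(j+1)R to x^jR by
   the inner inverse y); on the rest it is the identity. *)
pose d := mul (mul (cpow j) y) (mul d1 h) + e - h.
exists d => v xv [s vs].
have ev : mul e v = v by rewrite vs mulA e_cpow.
have [xhv [s1 hvs1]] := h_range v.
have [[s2 d1hv] d1_inj] := lift1 _ xhv (ex_intro _ s1 hvs1).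
have dv : mul d v = mul (cpow j) (mul y (mul d1 (mul h v))) + v - mul h v.
  by rewrite linearBl linearDl /= ev -!mulA.
split.
  exists (mul y (mul d1 (mul h v)) + s - mul x s1).
  by rewrite dv linearBr linearDr -vs hvs1 cpowSr -mulA.
move=> [t dvt].
have xdv : mul x (mul d v) = mul d1 (mul h v).
  by rewrite dv linearBr linearDr /= xv xhv addr0 subr0 (mulA x) -cpowS d1hv 2!mulA yreg.
have hv0 : mul h v = 0.
  by apply: d1_inj; exists t; rewrite -xdv dvt mulA -cpowS.
rewrite -hv0 h_id //; exists t.
by rewrite -dvt dv hv0 !linear0r add0r subr0.
Qed.

Lemma kernel_lift0 : exists d, kernel_lift 0 d.
Proof.
have [n [w nw]] := strongly_pi_regular.
suff lift_down i : (i <= n)%N -> exists d, kernel_lift (n - i) d.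
  by have := lift_down n (leqnn n); rewrite subnn.
elim: i => [_|i IHi lt_in]; first by rewrite subn0; exists 0; exact: kernel_lift_base nw.
have [d lift_d] := IHi (ltnW lt_in).
by apply: (kernel_lift_step (d1 := d)); rewrite subnSK.
Qed.

Lemma injective_left_factor y d : corner e y -> mul (mul x y) x = x -> kernel_lift 0 d ->
  exists a, corner e a /\ (forall w, mul e w = w -> mul a w = 0 -> w = 0) /\
            mul a (mul y x) = x.
Proof.
move=> [ey ye] xyx lift_d.
set p := mul x y; set q := mul y x.
have px : mul p x = x := xyx.
have pp : mul p p = p by rewrite {2}/p mulA px.
have ep : mul e p = p by rewrite /p mulA ex.
have pe : mul p e = p by rewrite /p -mulA ye.
have qq : mul q q = q by rewrite /q -mulA (mulA x y x) xyx.
have e_q : mul e q = q by rewrite /q mulA ey.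
have qe : mul q e = q by rewrite /q -mulA xe.
have xq : mul x q = x by rewrite /q mulA xyx.
pose D := mul (mul (e - p) d) (e - q).
have eD : mul e D = D by rewrite /D (mulA e) (mulA e) [mul e _]linearBr e_idem ep.
have De : mul D e = D by rewrite /D -mulA [mul (e - q) _]linearBl /= qe e_idem.
have pD : mul p D = 0 by rewrite /D (mulA p) (mulA p) [mul p _]linearBr pe pp subrr !linear0l.
have Dq : mul D q = 0 by rewrite /D -mulA [mul (e - q) _]linearBl /= qq e_q subrr linear0r.
have Dw w : mul e w = w -> mul x w = 0 -> mul D w = mul (e - p) (mul d w).
  move=> ew xw; rewrite /D -mulA [mul (e - q) _]linearBl /= ew /q -(mulA y) xw.
  by rewrite linear0r subr0 -mulA.
clearbody D.
exists (x + D); split.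
  by split; rewrite ?linearDr ?linearDl /= ?ex ?eD ?xe ?De.
split; last by rewrite linearDl /= xq Dq addr0.
move=> w ew aw.
have xw : mul x w = 0.
  by rewrite -px -(addr0 (mul p x)) -pD -linearDr -mulA aw linear0r.
have [[s ds] d_inj] := lift_d w xw (ex_intro _ w (esym ew)).
apply: d_inj; exists (mul y (mul d w)); rewrite cpow1.
have edw : mul e (mul d w) = mul d w by rewrite ds mulA e_cpow.
have : mul (e - p) (mul d w) = 0 by rewrite -Dw // -[LHS]add0r -xw -linearDl aw.
by rewrite linearBl /= edw => /eqP; rewrite subr_eq0 => /eqP dwp; rewrite {1}dwp -mulA.
Qed.

Lemma corner_unit_regular : exists u v, corner e u /\ corner e v /\
  mul u v = e /\ mul v u = e /\ mul (mul x u) x = x.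
Proof.
have [y y_corner xyx] := corner_regular (conj ex xe).
have [d lift_d] := kernel_lift0.
have [a [a_corner [a_inj aq]]] := injective_left_factor y_corner xyx lift_d.
have [b [b_corner [ab ba]]] := corner_unit_of_injective a_corner a_inj.
exists b, a; do !split=> //.
by rewrite -[X in mul _ X = _]aq mulA -(mulA x b a) ba xe mulA xyx.
Qed.

End Element.

End Corner.

Theorem lfd_vN_regular_locally_unit_regular : locally_unit_regular mul.
Proof.
move=> F; have [e [e_idem eF]] := local_unit F.
exists (corner e); split; first exact: corner_subalgebra.
split; first exact: eF.
exists e; split; first by split.
split; first by move=> x [].
by move=> x [ex xe]; apply: corner_unit_regular.
Qed.

End LocallyFiniteRegular.

Theorem proposition5p5 (K : fieldType) (V : lmodType K) (mul : V -> V -> V) :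
  assoc_algebra_mul mul -> vN_regular mul -> locally_finite_dim mul ->
  locally_unit_regular mul.
Proof.
move=> [mulA [mulDZl mulDZr]].
have mul_bilinear : bilinear_for *:%R *:%R mul.
  by split=> z a x y; [apply: mulDZl | apply: mulDZr].
pose bmul : {bilinear V -> V -> V} :=
  HB.pack mul (bilinear_isBilinear.Build K V V V *:%R *:%R mul mul_bilinear).
exact: (@lfd_vN_regular_locally_unit_regular K V bmul mulA).
Qed.
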